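(* Let $A\in\mathbb{R}^{n\times n}$ be symmetric, let $W_k\in\mathbb{R}^{n\times m}$ satisfy $W_k^TW_k=I_m$, and let $v_{k-1},v_k\in\mathbb{R}^{n\times p}$ and $\alpha_k,\beta_k\in\mathbb{R}^{p\times p}$ be given. Define $q_{k+j},\beta_{k+j}$, $j\ge1$, by the continuation process \[ \begin{aligned} \tilde q_{k+1}&=Av_k-v_k\alpha_k-v_{k-1}\beta_k^T, & q_{k+1}\beta_{k+1}&=(I_n-P_1)\tilde q_{k+1},\\ \tilde q_{k+2}&=Aq_{k+1}-v_k\beta_{k+1}^T, & q_{k+2}\beta_{k+2}&=(I_n-P_2)\tilde q_{k+2},\\ \tilde q_{k+j}&=Aq_{k+j-1}-q_{k+j-2}\beta_{k+j-1}^T, & q_{k+j}\beta_{k+j}&=(I_n-P_j)\tilde q_{k+j},\quad j\ge3, \end{aligned} \] where $P_1=W_kW_k^T$, $P_2=P_1+q_{k+1}q_{k+1}^T$, $P_j=P_2+q_{k+j-1}q_{k+j-1}^T$ for $j\ge3$, and the columns of $q_{k+j}$ form an orthonormal basis of the column space of $(I_n-P_j)\tilde q_{k+j}$, with $\beta_{k+j}$ of full row rank. Then the process can be written as \[ \begin{aligned} q_{k+1}\beta_{k+1}&=Av_k-v_k\alpha_k-v_{k-1}\beta_k^T-h_k,\\ q_{k+2}\beta_{k+2}&=Aq_{k+1}-q_{k+1}\alpha_{k+1}-v_k\beta_{k+1}^T-h_{k+1},\\ q_{k+j}\beta_{k+j}&=Aq_{k+j-1}-q_{k+j-1}\alpha_{k+j-1}-q_{k+j-2}\beta_{k+j-1}^T-h_{k+j-1},\quad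 j\ge3, \end{aligned} \] where \[ \alpha_{k+1}=q_{k+1}^T(Aq_{k+1}-v_k\beta_{k+1}^T),\qquad \alpha_{k+j-1}=q_{k+j-1}^TAq_{k+j-1}\ (j\ge3), \] and \[ \begin{aligned} h_k&=P_1\left(Av_k-v_k\alpha_k-v_{k-1}\beta_k^T\right),\\ h_{k+1}&=P_1\left(Aq_{k+1}-v_k\beta_{k+1}^T\right),\\ h_{k+j-1}&=P_1Aq_{k+j-1}+q_{k+1}\beta_{k+1}v_k^Tq_{k+j-1},\quad j\ge3. \end{aligned} \]
   Context: In cases of rank deficiency the number of columns of $q_{k+j}$ is reduced accordingly and $\beta_{k+j}$ becomes rectangular with full row rank. *)

From HB Require Import structures.
From mathcomp Require Export all_boot all_order all_algebra.
From mathcomp Require Export reals.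
Set Implicit Arguments. Unset Strict Implicit. Unset Printing Implicit Defensive.
Import GRing.Theory Num.Theory.
Local Open Scope ring_scope.

(* [onb_col Q M]: the columns of Q form an orthonormal basis of the column
   space of M, i.e. Q^T Q = I and the column space of Q (= row space of Q^T)
   equals the column space of M. *)
Definition onb_col {R : fieldType} {n c d : nat}
  (Q : 'M[R]_(n, c)) (M : 'M[R]_(n, d)) : Prop :=
  Q^T *m Q = 1%:M /\ (Q^T == M^T)%MS.

From HB Require Import structures.
From mathcomp Require Import all_boot all_order all_algebra.
From mathcomp Require Import reals zify.
Import GRing.Theory Num.Theory.
Local Open Scope ring_scope.

(* Everything rests on the mutual orthogonality of the blocks W, q_{k+1},
   q_{k+2}, ..., proved by induction on the index b of the newest block.  The
   blocks spanning the range of P_b (W, q_{k+1} and q_{k+b-1}) are annihilated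
   by I - P_b, hence orthogonal to q_{k+b}, whose columns lie in the range of
   I - P_b.  For any other earlier block q_{k+a}, symmetry of A and the
   recurrence for A q_{k+a} give
     q_{k+a}^T \tilde q_{k+b} = beta_{k+a} q_{k+a-1}^T q_{k+b-1} = 0,
   and since beta_{k+b} has full row rank it cancels from
   q_{k+a}^T q_{k+b} beta_{k+b} = q_{k+a}^T \tilde q_{k+b}.  Once orthogonality
   is known, expanding (I - P_j) \tilde q_{k+j} block by block gives the stated
   formulas; the one cross term that survives is the same identity for a = 1
   (reading q_k as v_k):
     q_{k+1}^T \tilde q_{k+j} = beta_{k+1} v_k^T q_{k+j-1}. *)

Set Implicit Arguments.
Unset Strict Implicit.

Section OrthogonalProjections.

Variables (R : fieldType) (n : nat).
Implicit Types (P : 'M[R]_n).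

Lemma orthC a b (X : 'M[R]_(n, a)) (Y : 'M[R]_(n, b)) :
  X^T *m Y = 0 -> Y^T *m X = 0.
Proof. by move=> XY; rewrite -[Y^T *m X]trmxK trmx_mul trmxK XY trmx0. Qed.

Lemma onb_col_orth c d s (Q : 'M[R]_(n, c)) (M : 'M[R]_(n, d))
    (Y : 'M[R]_(n, s)) :
  onb_col Q M -> Y^T *m M = 0 -> Y^T *m Q = 0.
Proof.
case=> _ /andP[/submxP[D QD] _] YM.
by rewrite -[Q]trmxK QD trmx_mul trmxK mulmxA YM mul0mx.
Qed.

Lemma mulmx_residual c d s P (Q : 'M[R]_(n, c)) (B : 'M[R]_(c, d))
    (X : 'M[R]_(n, d)) (Y : 'M[R]_(n, s)) :
  Q *m B = (1%:M - P) *m X -> Y^T *m P = 0 -> Y^T *m X = Y^T *m Q *m B.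
Proof.
move=> QB YP; rewrite -mulmxA QB mulmxBl mul1mx mulmxBr mulmxA YP.
by rewrite mul0mx subr0.
Qed.

Lemma mulmx_proj_add_eq0 c s P (Q : 'M[R]_(n, c)) (Y : 'M[R]_(n, s)) :
  Y^T *m P = 0 -> Y^T *m Q = 0 -> Y^T *m (P + Q *m Q^T) = 0.
Proof. by move=> YP YQ; rewrite mulmxDr mulmxA YP YQ mul0mx addr0. Qed.

Lemma mulmx_compl_proj_self c (Q : 'M[R]_(n, c)) :
  Q^T *m Q = 1%:M -> Q^T *m (1%:M - Q *m Q^T) = 0.
Proof. by move=> QQ; rewrite mulmxBr mulmx1 mulmxA QQ mul1mx subrr. Qed.

Lemma mulmx_compl_proj_add c s P (Q : 'M[R]_(n, c)) (Y : 'M[R]_(n, s)) :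
  Y^T *m (1%:M - P) = 0 -> Y^T *m Q = 0 -> Y^T *m (1%:M - (P + Q *m Q^T)) = 0.
Proof.
move=> YP YQ; rewrite opprD addrA mulmxDr YP add0r.
by rewrite mulmxN mulmxA YQ mul0mx oppr0.
Qed.

Lemma mulmx_compl_proj_new c P (Q : 'M[R]_(n, c)) :
  Q^T *m Q = 1%:M -> Q^T *m P = 0 -> Q^T *m (1%:M - (P + Q *m Q^T)) = 0.
Proof.
move=> QQ QP; rewrite opprD addrCA mulmxDr mulmx_compl_proj_self //.
by rewrite mulmxN QP oppr0 addr0.
Qed.

Lemma compl_proj_add_mul c d P (Q : 'M[R]_(n, c)) (X : 'M[R]_(n, d)) :
  (1%:M - (P + Q *m Q^T)) *m X = X - P *m X - Q *m (Q^T *m X).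
Proof. by rewrite mulmxBl mul1mx mulmxDl opprD addrA mulmxA. Qed.

End OrthogonalProjections.

Section ContinuationProcess.

Variables (R : fieldType) (n m : nat) (r : nat -> nat).
Variables (A : 'M[R]_n) (W : 'M[R]_(n, m)).
Variables (vkm1 vk : 'M[R]_(n, r 0%N)) (alphak betak : 'M[R]_(r 0%N)).
Variables (q : forall j, 'M[R]_(n, r j)) (beta : forall j, 'M[R]_(r j, r j.-1)).

(* [proj j], [qtilde j] and [qprev j] are P_j, \tilde q_{k+j} and q_{k+j-1}
   (with q_k read as v_k); their values at j = 0 are junk. *)
Definition proj (j : nat) : 'M[R]_n :=
  match j with
  | 0 | 1 => W *m W^T
  | 2 => W *m W^T + q 1 *m (q 1)^T
  | i.+3 => W *m W^T + q 1 *m (q 1)^T + q i.+2 *m (q i.+2)^T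
  end.

Definition qprev (j : nat) : 'M[R]_(n, r j.-1) :=
  match j with 0 | 1 => vk | i.+2 => q i.+1 end.

Definition qtilde (j : nat) : 'M[R]_(n, r j.-1) :=
  match j with
  | 0 => 0
  | 1 => A *m vk - vk *m alphak - vkm1 *m betak^T
  | i.+2 => A *m q i.+1 - qprev i.+1 *m (beta i.+1)^T
  end.

Hypothesis A_sym : A^T = A.
Hypothesis W_orthonormal : W^T *m W = 1%:M.
Hypothesis q_step : forall j, (0 < j)%N ->
  q j *m beta j = (1%:M - proj j) *m qtilde j /\
  onb_col (q j) ((1%:M - proj j) *m qtilde j).
Hypothesis beta_row_free : forall j, (0 < j)%N -> row_free (beta j).

Lemma q_orthonormal j : (0 < j)%N -> (q j)^T *m q j = 1%:M.
Proof. by move=> /q_step[_ []]. Qed.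

Lemma mulmx_qtilde s j (Y : 'M[R]_(n, s)) : (0 < j)%N ->
  Y^T *m proj j = 0 -> Y^T *m qtilde j = Y^T *m q j *m beta j.
Proof. by move=> /q_step[qbeta _]; apply: mulmx_residual. Qed.

Lemma q_orth_compl_proj s j (Y : 'M[R]_(n, s)) : (0 < j)%N ->
  Y^T *m (1%:M - proj j) = 0 -> Y^T *m q j = 0.
Proof.
move=> /q_step[_ onb] Yj; apply: onb_col_orth onb _.
by rewrite mulmxA Yj mul0mx.
Qed.

Lemma mulmx_proj_eq0 s j (Y : 'M[R]_(n, s)) :
  Y^T *m W = 0 -> ((1 < j)%N -> Y^T *m q 1 = 0) ->
  ((2 < j)%N -> Y^T *m q j.-1 = 0) ->
  Y^T *m proj j = 0.
Proof.
have YW0 : Y^T *m W = 0 -> Y^T *m (W *m W^T) = 0.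
  by rewrite mulmxA => ->; rewrite mul0mx.
case: j => [|[|[|i]]] YW Y1 Yj; rewrite /= ?YW0 //.
  exact: mulmx_proj_add_eq0 (YW0 YW) (Y1 isT).
exact: mulmx_proj_add_eq0 (mulmx_proj_add_eq0 (YW0 YW) (Y1 isT)) (Yj isT).
Qed.

Lemma mul_A_q j : (0 < j)%N -> A *m q j = qtilde j.+1 + qprev j *m (beta j)^T.
Proof. by case: j => // j _; rewrite subrK. Qed.

Lemma trmx_mul_A_sym a b (X : 'M[R]_(n, a)) (Y : 'M[R]_(n, b)) :
  X^T *m (A *m Y) = (Y^T *m (A *m X))^T.
Proof. by rewrite !trmx_mul trmxK A_sym mulmxA. Qed.

Definition orthogonal_blocks (b : nat) : Prop :=
  (forall a, (0 < a < b)%N -> W^T *m q a = 0) /\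
  (forall a a', (0 < a)%N -> (a < a' < b)%N -> (q a)^T *m q a' = 0).

Lemma orthogonal_blocks_q b a a' : orthogonal_blocks b ->
  (0 < a)%N -> (0 < a')%N -> (a < b)%N -> (a' < b)%N -> a != a' ->
  (q a)^T *m q a' = 0.
Proof.
case=> _ qq a_gt0 a'_gt0 ab a'b; case: ltngtP => // [aa' | a'a] _.
  by apply: qq; rewrite ?aa'.
by apply/orthC/qq; rewrite ?a'a.
Qed.

Lemma orthogonal_blocks_W b a : orthogonal_blocks b ->
  (0 < a)%N -> (a < b)%N -> (q a)^T *m W = 0.
Proof. by case=> Wq _ a_gt0 ab; apply/orthC/Wq; rewrite a_gt0. Qed.

Lemma W_compl_proj b : orthogonal_blocks b -> W^T *m (1%:M - proj b) = 0.
Proof.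
case=> Wq _; have W_self := mulmx_compl_proj_self W_orthonormal.
case: b Wq => [|[|[|i]]] Wq //=;
  have W_q1 := mulmx_compl_proj_add W_self (Wq 1%N isT); first exact: W_q1.
by apply: mulmx_compl_proj_add W_q1 (Wq i.+2 _); lia.
Qed.

Lemma q1_compl_proj b : (1 < b)%N -> orthogonal_blocks b ->
  (q 1)^T *m (1%:M - proj b) = 0.
Proof.
move=> b_gt1 orth.
have q1_new : (q 1)^T *m (1%:M - (W *m W^T + q 1 *m (q 1)^T)) = 0.
  apply: mulmx_compl_proj_new (q_orthonormal _) _ => //.
  by rewrite mulmxA (orthogonal_blocks_W orth) ?mul0mx.
case: b b_gt1 orth q1_new => [|[|[|i]]] //= _ orth q1_new.
by apply: mulmx_compl_proj_add q1_new (orthogonal_blocks_q orth _ _ _ _ _); lia.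
Qed.

Lemma qprev_compl_proj b : (2 < b)%N -> orthogonal_blocks b ->
  (q b.-1)^T *m (1%:M - proj b) = 0.
Proof.
case: b => [|[|[|i]]] //= _ orth.
apply: mulmx_compl_proj_new (q_orthonormal _) _ => //.
apply: mulmx_proj_add_eq0 (orthogonal_blocks_q orth _ _ _ _ _); try lia.
by rewrite mulmxA (orthogonal_blocks_W orth) ?mul0mx.
Qed.

Lemma trmx_q_qtilde a b : (0 < a)%N -> (a.+1 < b)%N -> orthogonal_blocks b ->
  (q a)^T *m qtilde b = beta a *m (qprev a)^T *m q b.-1.
Proof.
move=> a_gt0 ab orth.
have [c b_eq ac] : exists2 c, b = c.+3 & (a <= c.+1)%N by exists (b - 3)%N; lia.
subst b.
have qc_proj : (q c.+2)^T *m proj a.+1 = 0.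
  apply: mulmx_proj_eq0 => [||_]; first exact: (orthogonal_blocks_W orth).
    by move=> _; apply: (orthogonal_blocks_q orth); lia.
  by apply: (orthogonal_blocks_q orth); lia.
rewrite /= mulmxBr trmx_mul_A_sym (mul_A_q a_gt0) mulmxDr.
rewrite (mulmx_qtilde _ qc_proj) // raddfD /=.
have -> : ((q c.+2)^T *m q a.+1 *m beta a.+1)^T
    = (q a)^T *m (q c.+1 *m (beta c.+2)^T).
  case: ltngtP ac => // [ac | ->] _; rewrite mulmxA; last first.
    by rewrite !q_orthonormal // !mul1mx.
  by rewrite !(orthogonal_blocks_q orth) ?mul0mx ?trmx0 //; lia.
by rewrite addrAC subrr add0r !trmx_mul !trmxK.
Qed.

Lemma q_orth_earlier a b : (0 < a < b)%N -> orthogonal_blocks b ->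
  (q a)^T *m q b = 0.
Proof.
move=> /andP[a_gt0 ab] orth; have b_gt0 : (0 < b)%N by lia.
have [a1 | a_ne1] := eqVneq a 1%N.
  by subst a; apply: q_orth_compl_proj b_gt0 (q1_compl_proj ab orth).
have [a_prev | a_ne_prev] := eqVneq a b.-1.
  by subst a; apply: q_orth_compl_proj b_gt0 (qprev_compl_proj _ orth); lia.
have [a' a_eq] : exists a', a = a'.+2 by exists (a - 2)%N; lia.
subst a; apply: (row_free_inj (beta_row_free b_gt0)); rewrite mul0mx /=.
rewrite -mulmx_qtilde // ?trmx_q_qtilde //=; try lia.
  by rewrite -mulmxA (orthogonal_blocks_q orth) ?mulmx0 //; lia.
apply: mulmx_proj_eq0 => [|_|_]; first exact: (orthogonal_blocks_W orth).
  by apply: (orthogonal_blocks_q orth); lia.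
by apply: (orthogonal_blocks_q orth); lia.
Qed.

Lemma orthogonal_blocks_all b : orthogonal_blocks b.
Proof.
elim: b => [|b orth]; first by split=> [a | a a' _]; rewrite ltn0 andbF.
split=> [a | a a' a_gt0] /andP[].
  move=> a_gt0; rewrite ltnS leq_eqVlt => /predU1P[ab | ab].
    by subst a; apply: q_orth_compl_proj a_gt0 (W_compl_proj orth).
  by apply: orth.1; rewrite a_gt0.
move=> aa'; rewrite ltnS leq_eqVlt => /predU1P[a'b | a'b].
  by subst a'; apply: q_orth_earlier; rewrite ?a_gt0.
by apply: orth.2; rewrite ?aa'.
Qed.

Lemma q_beta_2 :
  q 2 *m beta 2 = A *m q 1 - q 1 *m ((q 1)^T *m (A *m q 1 - vk *m (beta 1)^T))
    - vk *m (beta 1)^T - W *m W^T *m (A *m q 1 - vk *m (beta 1)^T).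
Proof.
have [-> _] := q_step (isT : (0 < 2)%N).
by rewrite compl_proj_add_mul addrAC [X in X - _ = _]addrAC.
Qed.

Lemma q_beta_ge3 i :
  q i.+3 *m beta i.+3 = A *m q i.+2 - q i.+2 *m ((q i.+2)^T *m A *m q i.+2)
    - q i.+1 *m (beta i.+2)^T
    - (W *m W^T *m A *m q i.+2 + q 1 *m beta 1 *m vk^T *m q i.+2).
Proof.
have orth := orthogonal_blocks_all i.+3.
have [-> _] := q_step (ltn0Sn i.+2).
have W_qtilde : W^T *m qtilde i.+3 = W^T *m A *m q i.+2.
  rewrite /= mulmxBr !mulmxA (orthC (orthogonal_blocks_W orth _ _)) //.
  by rewrite mul0mx subr0.
have q_qtilde : (q i.+2)^T *m qtilde i.+3 = (q i.+2)^T *m A *m q i.+2.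
  rewrite /= mulmxBr !mulmxA (orthogonal_blocks_q orth) ?mul0mx ?subr0 //.
  lia.
rewrite [proj _]/= compl_proj_add_mul mulmxDl -!mulmxA W_qtilde q_qtilde.
rewrite (trmx_q_qtilde _ _ orth) //= !mulmxA.
by rewrite addrAC [X in X - _ = _]addrAC.
Qed.

Lemma continuation_process :
  let qt1 := A *m vk - vk *m alphak - vkm1 *m betak^T in
  [/\ q 1 *m beta 1 = qt1 - W *m W^T *m qt1,
      q 2 *m beta 2 = A *m q 1
        - q 1 *m ((q 1)^T *m (A *m q 1 - vk *m (beta 1)^T)) - vk *m (beta 1)^T
        - W *m W^T *m (A *m q 1 - vk *m (beta 1)^T)
    & forall i, q i.+3 *m beta i.+3 = A *m q i.+2
        - q i.+2 *m ((q i.+2)^T *m A *m q i.+2) - q i.+1 *m (beta i.+2)^T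
        - (W *m W^T *m A *m q i.+2 + q 1 *m beta 1 *m vk^T *m q i.+2)].
Proof.
split; [|exact: q_beta_2 | exact: q_beta_ge3].
by have [-> _] := q_step (isT : (0 < 1)%N); rewrite mulmxBl mul1mx.
Qed.

End ContinuationProcess.

Unset Implicit Arguments.
Theorem theorem4 (R : realType) (n m : nat) (r : nat -> nat)
  (A : 'M[R]_n) (W : 'M[R]_(n, m))
  (vkm1 vk : 'M[R]_(n, r 0%N)) (alphak betak : 'M[R]_(r 0%N))
  (q : forall j : nat, 'M[R]_(n, r j))
  (beta : forall j : nat, 'M[R]_(r j, r j.-1)) :
  A^T = A ->
  W^T *m W = 1%:M ->
  let P1 : 'M[R]_n := W *m W^T in
  let P2 : 'M[R]_n := P1 + q 1%N *m (q 1%N)^T in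
  let qt1 := A *m vk - vk *m alphak - vkm1 *m betak^T in
  let qt2 := A *m q 1%N - vk *m (beta 1%N)^T in
  (* j = 1 *)
  q 1%N *m beta 1%N = (1%:M - P1) *m qt1 ->
  onb_col (q 1%N) ((1%:M - P1) *m qt1) ->
  row_free (beta 1%N) ->
  (* j = 2 *)
  q 2%N *m beta 2%N = (1%:M - P2) *m qt2 ->
  onb_col (q 2%N) ((1%:M - P2) *m qt2) ->
  row_free (beta 2%N) ->
  (* j = i + 3 >= 3 *)
  (forall i : nat,
     let Pj : 'M[R]_n := P2 + q i.+2 *m (q i.+2)^T in
     let qtj := A *m q i.+2 - q i.+1 *m (beta i.+2)^T in
     [/\ q i.+3 *m beta i.+3 = (1%:M - Pj) *m qtj,
         onb_col (q i.+3) ((1%:M - Pj) *m qtj)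
       & row_free (beta i.+3)]) ->
  let alpha1 := (q 1%N)^T *m (A *m q 1%N - vk *m (beta 1%N)^T) in
  let hk := P1 *m (A *m vk - vk *m alphak - vkm1 *m betak^T) in
  let hk1 := P1 *m (A *m q 1%N - vk *m (beta 1%N)^T) in
  [/\ q 1%N *m beta 1%N = A *m vk - vk *m alphak - vkm1 *m betak^T - hk,
      q 2%N *m beta 2%N
        = A *m q 1%N - q 1%N *m alpha1 - vk *m (beta 1%N)^T - hk1
    & forall i : nat,
        let alphaj := (q i.+2)^T *m A *m q i.+2 in
        let hj := P1 *m A *m q i.+2
                  + q 1%N *m beta 1%N *m vk^T *m q i.+2 in
        q i.+3 *m beta i.+3
          = A *m q i.+2 - q i.+2 *m alphaj - q i.+1 *m (beta i.+2)^T - hj].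
Proof.
move=> A_sym W_orth P1 P2 qt1 qt2 E1 O1 F1 E2 O2 F2 step_ge3 alpha1 hk hk1.
apply: (continuation_process A_sym W_orth) => -[|[|[|i]]] // _;
  by case: (step_ge3 i).
Qed.
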